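(* Let $f:\mathbb{N}_0^n\to[0,\infty)$ be subadditive, and extend it to $\mathbb{R}_0^n=[0,\infty)^n$ by $f(\boldsymbol r)=f(\lceil\boldsymbol r\rceil)$ (ceiling taken coordinatewise). Then for every $\boldsymbol r\in\mathbb{R}_0^n$ the limit $\hat f(\boldsymbol r)=\lim_{t\to\infty}f(t\boldsymbol r)/t$ (over real $t\to\infty$) exists and is finite, and $\hat f$ is positively homogeneous: $\hat f(\alpha\boldsymbol r)=\alpha\hat f(\boldsymbol r)$ for all $\alpha\ge0$.
   Context: A function $f:\mathbb{N}_0^n\to[0,\infty)$ is subadditive if $f(\boldsymbol k+\boldsymbol m)\le f(\boldsymbol k)+f(\boldsymbol m)$ for all $\boldsymbol k,\boldsymbol m\in\mathbb{N}_0^n$. *)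

From Stdlib Require Import Reals ZArith Arith.
Open Scope R_scope.

(* Index set {0,...,n-1}; points of N_0^n and R^n are functions on it. *)
Definition idx (n : nat) : Type := {i : nat | (i < n)%nat}.

Definition nonneg_fun {n : nat} (f : (idx n -> nat) -> R) : Prop :=
  forall k, 0 <= f k.

Definition subadditive {n : nat} (f : (idx n -> nat) -> R) : Prop :=
  forall k m : idx n -> nat, f (fun i => (k i + m i)%nat) <= f k + f m.

Definition Rceil (x : R) : Z := (- Int_part (- x))%Z.

Definition ceil_vec {n : nat} (r : idx n -> R) : idx n -> nat :=
  fun i => Z.to_nat (Rceil (r i)).

Definition fext {n : nat} (f : (idx n -> nat) -> R) (r : idx n -> R) : R :=
  f (ceil_vec r).

Definition nonneg_vec {n : nat} (r : idx n -> R) : Prop := forall i, 0 <= r i.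

Definition scale_vec {n : nat} (t : R) (r : idx n -> R) : idx n -> R :=
  fun i => t * r i.

Definition lim_at_infty (g : R -> R) (L : R) : Prop :=
  forall eps : R, eps > 0 -> exists T : R, forall t : R, t > T -> Rabs (g t - L) < eps.

From Stdlib Require Import Reals ZArith Arith Lra Lia Psatz.
From Stdlib Require Import FunctionalExtensionality ClassicalEpsilon Classical.
Open Scope R_scope.

(* 1. Linear growth: subadditivity along the unit vectors gives constants C, B
      with f(k) <= C + B max_i k_i.
   2. Splitting: choose M >= r_i and lam >= 1/r_i (for r_i > 0).  For s, t > 0
      and q = floor(t / (s + lam)) we have ceil(t r) = q ceil(s r) + d with
      q <= t/s and every d_i <= M (s + lam t/s) + 1.  Hence, by subadditivity
      and step 1,
        f(ceil(t r))/t <= f(ceil(s r))/s + M lam B / s + E_s / t.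
   3. A Fekete-type lemma for real functions turns this inequality into
      convergence of h(t) = f(ceil(t r))/t, the limit being
      inf_{s>0} (h(s) + M lam B / s).
   4. Homogeneity follows by rescaling time (t -> alpha t) for alpha > 0; for
      alpha = 0 the ratio is a constant divided by t. *)

Lemma ceil_bounds (x : R) : 0 <= x -> x <= INR (Z.to_nat (Rceil x)) < x + 1.
Proof.
  intros Hx. unfold Rceil, Int_part.
  destruct (archimed (- x)) as [H1 H2].
  assert (E : IZR (- (up (- x) - 1)) = 1 - IZR (up (- x))).
  { rewrite opp_IZR, minus_IZR. simpl. ring. }
  assert (Hz : (0 <= - (up (- x) - 1))%Z) by (apply le_IZR; rewrite E; lra).
  rewrite INR_IZR_INZ, Z2Nat.id by exact Hz. rewrite E. lra.
Qed.

Lemma nat_floor_exists (y : R) : 0 <= y -> exists q : nat, INR q <= y < INR q + 1.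
Proof.
  intros Hy. destruct (base_Int_part y) as [H1 H2].
  assert (Hz : (0 <= Int_part y)%Z).
  { assert (-1 < Int_part y)%Z by (apply lt_IZR; simpl; lra). lia. }
  exists (Z.to_nat (Int_part y)). rewrite INR_IZR_INZ, Z2Nat.id by exact Hz. lra.
Qed.

Lemma idx_eq {n : nat} (i j : idx n) : proj1_sig i = proj1_sig j -> i = j.
Proof.
  destruct i as [i Hi], j as [j Hj]; simpl; intros <-.
  f_equal. apply Peano_dec.le_unique.
Qed.

Lemma finite_family_bounded (n : nat) (h : idx n -> R) : exists M, forall i, h i <= M.
Proof.
  assert (Hpref : forall m, exists M, forall i : idx n, (proj1_sig i < m)%nat -> h i <= M).
  { induction m as [|m [M HM]].
    - exists 0. intros i Hi; lia.
    - destruct (lt_dec m n) as [Hm|Hm].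
      + exists (Rmax M (h (exist _ m Hm))). intros i Hi.
        destruct (Nat.eq_dec (proj1_sig i) m) as [E|E].
        * rewrite (idx_eq i (exist _ m Hm) E). apply Rmax_r.
        * eapply Rle_trans; [apply HM; lia | apply Rmax_l].
      + exists M. intros i Hi. apply HM. pose proof (proj2_sig i). simpl in *. lia. }
  destruct (Hpref n) as [M HM]. exists M. intros i. apply HM, proj2_sig.
Qed.

Section LinearGrowth.

Variable n : nat.
Variable f : (idx n -> nat) -> R.
Hypothesis Hnn : nonneg_fun f.
Hypothesis Hsub : subadditive f.

Local Notation zero := (fun _ : idx n => 0%nat).

(* The m-th unit vector (the zero vector when m >= n). *)
Definition unit_vec (m : nat) : idx n -> nat :=
  fun j => if Nat.eqb (proj1_sig j) m then 1%nat else 0%nat.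

Definition coord_part (k : idx n -> nat) (m : nat) : idx n -> nat :=
  fun j => if Nat.eqb (proj1_sig j) m then k j else 0%nat.

Definition trunc (k : idx n -> nat) (m : nat) : idx n -> nat :=
  fun j => if Nat.ltb (proj1_sig j) m then k j else 0%nat.

Lemma f_multiple (q : nat) (v : idx n -> nat) :
  f (fun i => (q * v i)%nat) <= f zero + INR q * f v.
Proof.
  induction q as [|q IH].
  - simpl. lra.
  - replace (fun i => (S q * v i)%nat) with (fun i => (q * v i + v i)%nat)
      by (apply functional_extensionality; intros; lia).
    eapply Rle_trans; [apply Hsub|]. rewrite S_INR. lra.
Qed.

Lemma coord_part_scaled (k : idx n -> nat) (m : nat) (x : R) :
  0 <= x -> (forall i, INR (k i) <= x) ->
  exists c : nat, INR c <= x /\ coord_part k m = (fun j => (c * unit_vec m j)%nat).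
Proof.
  intros Hx Hk. unfold coord_part, unit_vec.
  destruct (lt_dec m n) as [Hm|Hm].
  - exists (k (exist _ m Hm)). split; [apply Hk|].
    apply functional_extensionality; intros j.
    destruct (Nat.eqb_spec (proj1_sig j) m) as [E|E]; [|lia].
    rewrite (idx_eq j (exist _ m Hm) E). lia.
  - exists 0%nat. split; [exact Hx|].
    apply functional_extensionality; intros j.
    destruct (Nat.eqb_spec (proj1_sig j) m) as [E|E]; [|lia].
    destruct j as [j Hj]; simpl in E; lia.
Qed.

Lemma f_coord_part (k : idx n -> nat) (m : nat) (x : R) :
  0 <= x -> (forall i, INR (k i) <= x) ->
  f (coord_part k m) <= f zero + x * f (unit_vec m).
Proof.
  intros Hx Hk. destruct (coord_part_scaled k m x Hx Hk) as [c [Hc ->]].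
  pose proof (f_multiple c (unit_vec m)). pose proof (Hnn (unit_vec m)). nra.
Qed.

Lemma linear_growth : exists C B, 0 <= B /\
  forall (x : R) (k : idx n -> nat), 0 <= x -> (forall i, INR (k i) <= x) -> f k <= C + x * B.
Proof.
  assert (Htrunc : forall m, exists C B, 0 <= B /\ forall x k, 0 <= x ->
            (forall i, INR (k i) <= x) -> f (trunc k m) <= C + x * B).
  { induction m as [|m [C [B [HB IH]]]].
    - exists (f zero), 0. split; [lra|]. intros x k _ _.
      replace (trunc k 0) with zero; [lra|].
      apply functional_extensionality; intros j. unfold trunc.
      destruct (Nat.ltb_spec (proj1_sig j) 0); [lia|reflexivity].
    - exists (C + f zero), (B + f (unit_vec m)).
      split; [pose proof (Hnn (unit_vec m)); lra|]. intros x k Hx Hk.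
      replace (trunc k (S m)) with (fun j => (trunc k m j + coord_part k m j)%nat).
      + eapply Rle_trans; [apply Hsub|].
        pose proof (IH x k Hx Hk). pose proof (f_coord_part k m x Hx Hk). lra.
      + apply functional_extensionality; intros j. unfold trunc, coord_part.
        destruct (Nat.ltb_spec (proj1_sig j) m); destruct (Nat.eqb_spec (proj1_sig j) m);
          destruct (Nat.ltb_spec (proj1_sig j) (S m)); lia. }
  destruct (Htrunc n) as [C [B [HB HC]]]. exists C, B. split; [exact HB|].
  intros x k Hx Hk. replace k with (trunc k n) at 1; [now apply HC|].
  apply functional_extensionality; intros j. unfold trunc.
  destruct j as [j Hj]; simpl. destruct (Nat.ltb_spec j n); [reflexivity|lia].
Qed.

End LinearGrowth.

Lemma ceil_coord_split (rho M lam s t : R) (q : nat) :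
  0 <= rho <= M -> (0 < rho -> 1 <= lam * rho) -> 0 < s -> 0 <= lam ->
  INR q * (s + lam) <= t ->
  let a := Z.to_nat (Rceil (s * rho)) in
  let b := Z.to_nat (Rceil (t * rho)) in
  (q * a <= b)%nat /\ INR b - INR q * INR a <= M * (t - INR q * s) + 1.
Proof.
  intros [Hrho0 HrhoM] Hlam Hs Hlam0 Hq a b.
  pose proof (pos_INR q) as Hq0.
  assert (Ht : 0 <= t) by nra.
  destruct (ceil_bounds (s * rho) ltac:(nra)) as [Ha1 Ha2].
  destruct (ceil_bounds (t * rho) ltac:(nra)) as [Hb1 Hb2].
  fold a in Ha1, Ha2. fold b in Hb1, Hb2. clearbody a b.
  assert (Hqa : INR q * (s * rho) <= INR q * INR a) by nra.
  split.
  - apply INR_le. rewrite mult_INR.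
    destruct (Req_dec rho 0) as [E|E].
    + assert (a = 0%nat) as ->.
      { rewrite E, Rmult_0_r in Ha2. destruct a; [reflexivity|].
        rewrite S_INR in Ha2. pose proof (pos_INR a). lra. }
      simpl. rewrite Rmult_0_r. apply pos_INR.
    + specialize (Hlam ltac:(lra)).
      assert (INR q * INR a <= INR q * (s * rho + 1)) by nra.
      assert (INR q <= INR q * (lam * rho)) by nra.
      assert (INR q * (s + lam) * rho <= t * rho) by (apply Rmult_le_compat_r; lra).
      lra.
  - assert (Hgap : 0 <= t - INR q * s) by nra.
    assert (rho * (t - INR q * s) <= M * (t - INR q * s)) by (apply Rmult_le_compat_r; lra).
    lra.
Qed.

Lemma ceil_vec_split {n : nat} (r : idx n -> R) (M lam s t : R) :
  (forall i, 0 <= r i <= M) -> (forall i, 0 < r i -> 1 <= lam * r i) ->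
  0 < s -> 0 <= lam -> 0 < t ->
  exists (q : nat) (d : idx n -> nat),
    ceil_vec (scale_vec t r) = (fun i => (q * ceil_vec (scale_vec s r) i + d i)%nat) /\
    INR q <= t / s /\
    forall i, INR (d i) <= M * (s + lam * t / s) + 1.
Proof.
  intros Hr Hlam Hs Hlam0 Ht.
  set (y := t / (s + lam)).
  destruct (nat_floor_exists y) as [q [Hq1 Hq2]]; [unfold y; apply Rlt_le, Rdiv_lt_0_compat; lra|].
  assert (Hyt : y * (s + lam) = t) by (unfold y; field; lra).
  assert (Hys : y <= t / s).
  { unfold y, Rdiv. apply Rmult_le_compat_l; [lra|]. apply Rinv_le_contravar; lra. }
  assert (Hqt : INR q * (s + lam) <= t) by nra.
  assert (Hgap : t - INR q * s <= s + lam * t / s).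
  { assert (y * lam <= lam * t / s) by (unfold Rdiv; nra). nra. }
  pose proof (fun i => ceil_coord_split (r i) M lam s t q (Hr i) (Hlam i) Hs Hlam0 Hqt) as Hsplit.
  exists q, (fun i => (ceil_vec (scale_vec t r) i - q * ceil_vec (scale_vec s r) i)%nat).
  split; [|split; [nra|]].
  - apply functional_extensionality; intros i.
    destruct (Hsplit i) as [Hle _]. unfold ceil_vec, scale_vec. lia.
  - intros i. destruct (Hsplit i) as [Hle Hdiff].
    unfold ceil_vec, scale_vec. rewrite minus_INR, mult_INR by exact Hle.
    assert (0 <= M) by (pose proof (Hr i); lra).
    nra.
Qed.

Lemma div_eventually_small (c eps : R) :
  0 < eps -> exists T, 0 < T /\ forall t, T < t -> Rabs (c / t) < eps.
Proof.
  intros Heps. exists (Rabs c / eps + 1).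
  assert (HT : 0 <= Rabs c / eps) by (apply Rle_mult_inv_pos; [apply Rabs_pos|lra]).
  split; [lra|]. intros t Ht.
  unfold Rdiv. rewrite Rabs_mult, Rabs_inv, (Rabs_pos_eq t) by lra.
  apply (Rmult_lt_reg_r t); [lra|]. rewrite Rmult_assoc, Rinv_l, Rmult_1_r by lra.
  apply (Rmult_lt_reg_r (/ eps)); [apply Rinv_0_lt_compat; lra|].
  replace (eps * t * / eps) with t by (field; lra). fold (Rabs c / eps). lra.
Qed.

Lemma family_inf (P : R -> Prop) (v : R -> R) (b : R) :
  (exists s, P s) -> (forall s, P s -> b <= v s) ->
  exists L, (forall s, P s -> L <= v s) /\
            (forall eps, 0 < eps -> exists s, P s /\ v s < L + eps).
Proof.
  intros [s0 Hs0] Hb.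
  set (E := fun y => exists s, P s /\ y = - v s).
  destruct (completeness E) as [m [Hub Hlub]].
  - exists (- b). intros y [s [Hs ->]]. specialize (Hb s Hs). lra.
  - exists (- v s0). now exists s0.
  - exists (- m). split.
    + intros s Hs. assert (- v s <= m) by (apply Hub; now exists s). lra.
    + intros eps Heps. apply NNPP. intros Hno.
      assert (m <= m - eps); [|lra].
      apply Hlub. intros y [s [Hs ->]].
      assert (~ v s < - m + eps) by (intros Hlt; apply Hno; now exists s). lra.
Qed.

(* Fekete-type lemma: if h >= 0 and h(t) <= h(s) + A/s + E_s/t for all s, t > 0,
   then h(t) converges as t -> oo, to inf_s (h(s) + |A|/s). *)
Lemma limit_of_almost_subadditive (h : R -> R) (A : R) :
  (forall t, 0 < t -> 0 <= h t) ->
  (forall s, 0 < s -> exists E, forall t, 0 < t -> h t <= h s + A / s + E / t) ->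
  exists L, lim_at_infty h L.
Proof.
  intros Hh0 Hbound.
  destruct (family_inf (fun s => 0 < s) (fun s => h s + Rabs A / s) 0) as [L [HLlow HLapprox]].
  - exists 1. lra.
  - intros s Hs. pose proof (Hh0 s Hs).
    assert (0 <= Rabs A / s) by (apply Rle_mult_inv_pos; [apply Rabs_pos|lra]). lra.
  - exists L. intros eps Heps.
    destruct (HLapprox (eps / 2)) as [s [Hs HsL]]; [lra|].
    destruct (Hbound s Hs) as [E HE].
    destruct (div_eventually_small E (eps / 2)) as [T1 [HT1 Hsmall1]]; [lra|].
    destruct (div_eventually_small A eps) as [T2 [HT2 Hsmall2]]; [lra|].
    exists (Rmax T1 T2). intros t Ht.
    assert (T1 < t /\ T2 < t) as [Ht1 Ht2]
      by (pose proof (Rmax_l T1 T2); pose proof (Rmax_r T1 T2); lra).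
    assert (Hupper : h t <= h s + Rabs A / s + E / t).
    { pose proof (HE t ltac:(lra)). assert (A / s <= Rabs A / s); [|lra].
      apply Rmult_le_compat_r; [left; apply Rinv_0_lt_compat; lra|apply Rle_abs]. }
    assert (Hlower : L <= h t + Rabs A / t) by (apply HLlow; lra).
    assert (Rabs A / t = Rabs (A / t)) as HA.
    { unfold Rdiv. rewrite Rabs_mult, Rabs_inv, (Rabs_pos_eq t) by lra. reflexivity. }
    specialize (Hsmall1 t Ht1). specialize (Hsmall2 t Ht2).
    apply Rabs_def2 in Hsmall1. rewrite HA in Hlower.
    apply Rabs_def1; lra.
Qed.

Lemma nonneg_vec_bounds {n : nat} (r : idx n -> R) : nonneg_vec r ->
  exists M lam, 0 <= M /\ 0 <= lam /\
    (forall i, 0 <= r i <= M) /\ (forall i, 0 < r i -> 1 <= lam * r i).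
Proof.
  intros Hr.
  destruct (finite_family_bounded n r) as [M HM].
  destruct (finite_family_bounded n (fun i => / r i)) as [lam Hlam].
  exists (Rmax M 0), (Rmax lam 0).
  split; [apply Rmax_r|]. split; [apply Rmax_r|]. split.
  - intros i. split; [apply Hr|]. eapply Rle_trans; [apply HM|apply Rmax_l].
  - intros i Hi. replace 1 with (/ r i * r i) by (field; lra).
    apply Rmult_le_compat_r; [lra|]. eapply Rle_trans; [apply Hlam|apply Rmax_l].
Qed.

Section Limit.

Variable n : nat.
Variable f : (idx n -> nat) -> R.
Hypothesis Hnn : nonneg_fun f.
Hypothesis Hsub : subadditive f.

Lemma fext_ratio_bound (C B : R) (r : idx n -> R) (M lam s t : R) :
  0 <= B -> (forall x k, 0 <= x -> (forall i, INR (k i) <= x) -> f k <= C + x * B) ->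
  0 <= M -> (forall i, 0 <= r i <= M) -> (forall i, 0 < r i -> 1 <= lam * r i) ->
  0 < s -> 0 <= lam -> 0 < t ->
  fext f (scale_vec t r) / t <=
    fext f (scale_vec s r) / s + M * lam * B / s
    + (f (fun _ => 0%nat) + C + (M * s + 1) * B) / t.
Proof.
  intros HB Hgrowth HM Hr Hlam Hs Hlam0 Ht.
  destruct (ceil_vec_split r M lam s t Hr Hlam Hs Hlam0 Ht) as [q [d [Hsplit [Hq Hd]]]].
  unfold fext. set (Ft := f (ceil_vec (scale_vec t r))).
  set (Fs := f (ceil_vec (scale_vec s r))).
  set (x := M * (s + lam * t / s) + 1) in Hd.
  assert (Hx : 0 <= x).
  { unfold x. assert (0 <= lam * t / s) by (apply Rle_mult_inv_pos; [nra|lra]). nra. }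
  assert (Hpieces : Ft <= f (fun _ => 0%nat) + INR q * Fs + (C + x * B)).
  { unfold Ft. rewrite Hsplit. eapply Rle_trans; [apply Hsub|].
    pose proof (f_multiple n f Hsub q (ceil_vec (scale_vec s r))) as Hmult.
    pose proof (Hgrowth x d Hx Hd). fold Fs in Hmult. lra. }
  assert (Hq_Fs : INR q * Fs <= t * (Fs / s)).
  { replace (t * (Fs / s)) with (t / s * Fs) by (field; lra).
    apply Rmult_le_compat_r; [apply Hnn|exact Hq]. }
  assert (HxB : x * B = t * (M * lam * B / s) + (M * s + 1) * B) by (unfold x; field; lra).
  apply (Rmult_le_reg_r t); [exact Ht|].
  replace (Ft / t * t) with Ft by (field; lra).
  replace ((Fs / s + M * lam * B / s + (f (fun _ => 0%nat) + C + (M * s + 1) * B) / t) * t)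
    with (t * (Fs / s) + t * (M * lam * B / s) + (f (fun _ => 0%nat) + C + (M * s + 1) * B))
    by (field; lra).
  lra.
Qed.

Lemma fext_limit_exists (r : idx n -> R) : nonneg_vec r ->
  exists L, lim_at_infty (fun t => fext f (scale_vec t r) / t) L.
Proof.
  intros Hr.
  destruct (linear_growth n f Hnn Hsub) as [C [B [HB Hgrowth]]].
  destruct (nonneg_vec_bounds r Hr) as [M [lam [HM [Hlam0 [HrM Hlam]]]]].
  apply (limit_of_almost_subadditive _ (M * lam * B)).
  - intros t Ht. apply Rle_mult_inv_pos; [apply Hnn|exact Ht].
  - intros s Hs. exists (f (fun _ => 0%nat) + C + (M * s + 1) * B). intros t Ht.
    now apply fext_ratio_bound.
Qed.

End Limit.

Lemma lim_at_infty_unique (g : R -> R) (L1 L2 : R) :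
  lim_at_infty g L1 -> lim_at_infty g L2 -> L1 = L2.
Proof.
  intros H1 H2. destruct (Req_dec L1 L2) as [|Hne]; [assumption|exfalso].
  set (e := Rabs (L1 - L2) / 2).
  assert (He : 0 < e) by (unfold e; pose proof (Rabs_pos_lt (L1 - L2) ltac:(lra)); lra).
  destruct (H1 e He) as [T1 HT1], (H2 e He) as [T2 HT2].
  set (t := Rmax T1 T2 + 1).
  pose proof (Rmax_l T1 T2). pose proof (Rmax_r T1 T2).
  pose proof (Rabs_def2 _ _ (HT1 t ltac:(unfold t; lra))).
  pose proof (Rabs_def2 _ _ (HT2 t ltac:(unfold t; lra))).
  unfold e in *. unfold Rabs in *. destruct (Rcase_abs (L1 - L2)); lra.
Qed.

Lemma lim_at_infty_rescale (g h : R -> R) (L a : R) : 0 < a ->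
  (forall t, 0 < t -> h t = a * g (a * t)) ->
  lim_at_infty g L -> lim_at_infty h (a * L).
Proof.
  intros Ha Hh Hg eps Heps.
  destruct (Hg (eps / a)) as [T HT]; [apply Rdiv_lt_0_compat; lra|].
  exists (Rmax 0 (T / a)). intros t Ht.
  pose proof (Rmax_l 0 (T / a)). pose proof (Rmax_r 0 (T / a)).
  assert (Hat : a * t > T).
  { replace T with (a * (T / a)) by (field; lra). apply Rmult_lt_compat_l; lra. }
  rewrite Hh by lra.
  replace (a * g (a * t) - a * L) with (a * (g (a * t) - L)) by ring.
  rewrite Rabs_mult, (Rabs_pos_eq a) by lra.
  replace eps with (a * (eps / a)) by (field; lra).
  apply Rmult_lt_compat_l; [exact Ha|exact (HT _ Hat)].
Qed.

Lemma lim_at_infty_const_div (c : R) : lim_at_infty (fun t => c / t) 0.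
Proof.
  intros eps Heps. destruct (div_eventually_small c eps Heps) as [T [_ HT]].
  exists T. intros t Ht. rewrite Rminus_0_r. now apply HT.
Qed.

Lemma scale_vec_scale_vec {n : nat} (t a : R) (r : idx n -> R) :
  scale_vec t (scale_vec a r) = scale_vec (a * t) r.
Proof. apply functional_extensionality; intros i. unfold scale_vec. ring. Qed.

Lemma limit_homogeneous {n : nat} (f : (idx n -> nat) -> R) (fhat : (idx n -> R) -> R)
  (alpha : R) (r : idx n -> R) : 0 <= alpha -> nonneg_vec r ->
  (forall r, nonneg_vec r -> lim_at_infty (fun t => fext f (scale_vec t r) / t) (fhat r)) ->
  fhat (scale_vec alpha r) = alpha * fhat r.
Proof.
  intros Halpha Hr Hlim.
  apply (lim_at_infty_unique (fun t => fext f (scale_vec t (scale_vec alpha r)) / t)).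
  { apply Hlim. intros i. apply Rmult_le_pos; [exact Halpha|apply Hr]. }
  destruct Halpha as [Hpos| <-].
  - apply (lim_at_infty_rescale (fun t => fext f (scale_vec t r) / t));
      [exact Hpos| |now apply Hlim].
    intros t Ht. rewrite scale_vec_scale_vec. field. lra.
  - rewrite Rmult_0_l.
    replace (fun t => fext f (scale_vec t (scale_vec 0 r)) / t)
      with (fun t => fext f (scale_vec 0 r) / t).
    + apply lim_at_infty_const_div.
    + apply functional_extensionality; intros t. now rewrite scale_vec_scale_vec, Rmult_0_l.
Qed.

Theorem mainTheorem9 (n : nat) (f : (idx n -> nat) -> R)
  (Hnn : nonneg_fun f) (Hsub : subadditive f) :
  exists fhat : (idx n -> R) -> R,
    (forall r : idx n -> R, nonneg_vec r ->
       lim_at_infty (fun t => fext f (scale_vec t r) / t) (fhat r)) /\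
    (forall (alpha : R) (r : idx n -> R), 0 <= alpha -> nonneg_vec r ->
       fhat (scale_vec alpha r) = alpha * fhat r).
Proof.
  set (fhat := fun r => epsilon (inhabits 0)
                          (lim_at_infty (fun t => fext f (scale_vec t r) / t))).
  assert (Hlim : forall r, nonneg_vec r ->
            lim_at_infty (fun t => fext f (scale_vec t r) / t) (fhat r)).
  { intros r Hr. apply epsilon_spec. now apply (fext_limit_exists n f). }
  exists fhat. split; [exact Hlim|].
  intros alpha r Halpha Hr. now apply (limit_homogeneous f).
Qed.
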